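(* Let $q$ be a prime power and let $\alpha$ be a primitive element of $GF(q^2)$, so that every element $x\in GF(q^2)$ can be written uniquely as $x=a+b\alpha$ with $a,b\in GF(q)$. (i) For each $c\in GF(q)^*$ let $S_c=\{x\in GF(q^2)^*: x=a+c\alpha \text{ for some } a\in GF(q)\}$. Then the family $\{S_c\}_{c\in GF(q)^*}$ is a $(q^2-1,q-1,q,q-1,0)$-DPDF and a $(q^2-1,q-1,q,(q-1)(q-2),q^2-q)$-EPDF in the multiplicative group $GF(q^2)^*$. (ii) For each $c\in GF(q)^*$ let $S'_c=\{i: \alpha^i\in S_c,\ 0\le i\le q^2-2\}\subseteq \mathbb{Z}_{q^2-1}$. Then the family $\{S'_c\}_{c\in GF(q)^*}$ is a $(q^2-1,q-1,q,q-1,0)$-DPDF and a $(q^2-1,q-1,q,(q-1)(q-2),q^2-q)$-EPDF in the additive group $\mathbb{Z}_{q^2-1}$.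
   Context: Let $G$ be a finite group with identity $e$, written multiplicatively (in an additive group such as $\mathbb{Z}_v$ read $xy^{-1}$ as $x-y$ and $e$ as $0$); $G^*=G\setminus\{e\}$. For $D_1,D_2\subseteq G$, $\Delta(D_1,D_2)$ is the multiset $\{xy^{-1}: x\in D_1, y\in D_2\}$, and for $D\subseteq G$, $\Delta(D)$ is the multiset $\{xy^{-1}: x,y\in D, x\neq y\}$. For a family $A=\{A_1,\dots,A_s\}$ of pairwise disjoint subsets of $G$, ${\rm Int}(A)$ is the multiset union of the $\Delta(A_i)$, and ${\rm Ext}(A)$ is the multiset union of $\Delta(A_i,A_j)$ over all ordered pairs $i\neq j$. If $|G|=v$, a $(v,s,k,\lambda,\mu)$-disjoint partial difference family (DPDF) is a family of $s$ pairwise disjoint $k$-subsets $A_1,\dots,A_s$ of $G^*$ such that, with $S=\bigcup_i A_i$, the multiset ${\rm Int}(A)$ contains each element of $S$ exactly $\lambda$ times and each element of $G\setminus(S\cup\{e\})$ exactly $\mu$ times. A $(v,s,k,\lambda,\mu)$-external partial difference family (EPDF) is defined identically with ${\rm Ext}(A)$ in place of ${\rm Int}(A)$. *)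

From mathcomp Require Import all_boot all_order all_algebra all_fingroup.
Set Implicit Arguments. Unset Strict Implicit. Unset Printing Implicit Defensive.

(* A family of subsets of a finite group gT is given by an index set P : {set I}
   and a map A : I -> {set gT}; the members are A i for i in P. *)
Section PDF.
Variables (gT : finGroupType) (I : finType).
Local Open Scope group_scope.

(* multiplicity of g in Int(A) = multiset union of Delta(A_i) *)
Definition int_mult (P : {set I}) (A : I -> {set gT}) (g : gT) : nat :=
  \sum_(i in P) #|[set xy in setX (A i) (A i) | (xy.1 != xy.2) && (xy.1 * xy.2^-1 == g)%g]|.

(* multiplicity of g in Ext(A) = multiset union of Delta(A_i, A_j), i <> j *)
Definition ext_mult (P : {set I}) (A : I -> {set gT}) (g : gT) : nat :=
  \sum_(i in P) \sum_(j in P | j != i)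
     #|[set xy in setX (A i) (A j) | (xy.1 * xy.2^-1 == g)%g]|.

Definition pdf_shape (v s k : nat) (P : {set I}) (A : I -> {set gT}) : Prop :=
  [/\ #|[set: gT]| = v, #|P| = s,
      (forall i, i \in P -> #|A i| = k /\ (1%g \notin A i))
    & (forall i j, i \in P -> j \in P -> i != j -> [disjoint A i & A j])].

Definition union_fam (P : {set I}) (A : I -> {set gT}) : {set gT} :=
  \bigcup_(i in P) A i.

Definition is_DPDF (v s k lam mu : nat) (P : {set I}) (A : I -> {set gT}) : Prop :=
  pdf_shape v s k P A /\
  forall g : gT,
    (g \in union_fam P A -> int_mult P A g = lam) /\
    (g \notin union_fam P A -> g != 1%g -> int_mult P A g = mu).

Definition is_EPDF (v s k lam mu : nat) (P : {set I}) (A : I -> {set gT}) : Prop :=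
  pdf_shape v s k P A /\
  forall g : gT,
    (g \in union_fam P A -> ext_mult P A g = lam) /\
    (g \notin union_fam P A -> g != 1%g -> ext_mult P A g = mu).
End PDF.

(* GF(q) inside a field F with q^2 elements: the fixed points of x |-> x^q *)
Definition subGF (F : finFieldType) (q : nat) : {set F} :=
  [set x : F | (x ^+ q == x)%R].

Definition S_set (F : finFieldType) (q : nat) (alpha c : F) : {set {unit F}} :=
  [set u : {unit F} | [exists a in @subGF F q, (val u == a + c * alpha)%R]].

Definition S'_set (F : finFieldType) (q : nat) (alpha c : F) : {set 'Z_(q ^ 2 - 1)} :=
  [set i : 'Z_(q ^ 2 - 1) | [exists u in @S_set F q alpha c, (val u == alpha ^+ (val i))%R]].

Definition subGFstar (F : finFieldType) (q : nat) : {set F} :=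
  @subGF F q :\ (0 : F)%R.

(* Write x in GF(q^2) as a + b alpha with a, b in GF(q).  The coordinate b is
   the GF(q)-linear form alpha_coord x = (x - x^q) / (alpha - alpha^q), and S_c
   is its level set at c.  For a unit g, the y in S_d with g y in S_c are the
   y = b + d alpha with b in GF(q) solving the affine equation
   b coord(g) + d coord(g alpha) = c.  If g is not in GF(q) there is exactly
   one solution; otherwise coord(g) = 0 and coord(g alpha) = g, so there are q
   solutions when d g = c and none when d g <> c.  Summing over c and d gives
   both multiplicity functions.  Part (ii) is the pullback of part (i) along
   the isomorphism i |-> alpha^i from Z_(q^2-1) onto GF(q^2)^*. *)

From mathcomp Require Import all_boot all_order all_algebra all_fingroup all_field.
From mathcomp Require Import ring zify.
Set Implicit Arguments. Unset Strict Implicit. Unset Printing Implicit Defensive.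
Import GRing.Theory FinRing.Theory.

Section Multiplicities.
Variables (gT : finGroupType) (I : finType).
Local Open Scope group_scope.

Lemma card_divg_pairs (B C : {set gT}) (g : gT) :
  #|[set xy in setX B C | xy.1 * xy.2^-1 == g]| = #|[set y in C | g * y \in B]|.
Proof.
have inj_pair : injective (fun y => (g * y, y)) by move=> y z [].
rewrite -(card_imset _ inj_pair); apply: eq_card => -[x y].
rewrite !inE /=; apply/andP/imsetP => [[/andP[xB yC] /eqP <-]|[z]].
  by exists y; rewrite ?inE ?mulgKV ?yC.
by rewrite inE => /andP[zC gzB] [-> ->]; rewrite gzB zC mulgK.
Qed.

Variables (P : {set I}) (A : I -> {set gT}).

Lemma int_multE (g : gT) : g != 1 ->
  int_mult P A g = \sum_(i in P) #|[set y in A i | (g * y)%g \in A i]|.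
Proof.
move=> g1; apply: eq_bigr => i _; rewrite -card_divg_pairs.
apply: eq_card => -[x y]; rewrite !inE /=.
have [->|_] //= := eqVneq x y.
by rewrite mulgV eq_sym (negbTE g1) !andbF.
Qed.

Lemma ext_multE (g : gT) : ext_mult P A g =
  \sum_(i in P) \sum_(j in P | j != i) #|[set y in A j | (g * y)%g \in A i]|.
Proof. by apply: eq_bigr => i _; apply: eq_bigr => j _; rewrite card_divg_pairs. Qed.

End Multiplicities.

Section Preimage.
Variables (gT hT : finGroupType) (I : finType) (f : gT -> hT).
Hypotheses (f_bij : bijective f) (fM : {morph f : x y / (x * y)%g}).
Variables (P : {set I}) (A : I -> {set hT}) (B : I -> {set gT}).
Hypothesis B_preim : forall i, B i = f @^-1: A i.
Local Open Scope group_scope.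

Let f_inj : injective f := bij_inj f_bij.

Let f1 : f 1 = 1.
Proof. by apply: (@mulgI _ (f 1)); rewrite -fM !mulg1. Qed.

Let fV x : f x^-1 = (f x)^-1.
Proof. by apply: (@mulgI _ (f x)); rewrite -fM !mulgV f1. Qed.

Let card_preim (T U : finType) (h : T -> U) (C : {set U}) :
  bijective h -> #|h @^-1: C| = #|C|.
Proof. by move=> h_bij; apply/on_card_preimset/onW_bij. Qed.

Let f2 (xy : gT * gT) := (f xy.1, f xy.2).

Let f2_bij : bijective f2.
Proof.
have [g fK gK] := f_bij.
by exists (fun xy => (g xy.1, g xy.2)) => -[x y]; rewrite /f2 /= ?fK ?gK.
Qed.

Lemma int_mult_preim g : int_mult P B g = int_mult P A (f g).
Proof.
apply: eq_bigr => i _; rewrite -(card_preim _ f2_bij); apply: eq_card => -[x y].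
by rewrite !inE /= !B_preim !inE -fV -fM !(inj_eq f_inj).
Qed.

Lemma ext_mult_preim g : ext_mult P B g = ext_mult P A (f g).
Proof.
apply: eq_bigr => i _; apply: eq_bigr => j _.
rewrite -(card_preim _ f2_bij); apply: eq_card => -[x y].
by rewrite !inE /= !B_preim !inE -fV -fM !(inj_eq f_inj).
Qed.

Lemma union_fam_preim g : (g \in union_fam P B) = (f g \in union_fam P A).
Proof.
by apply/bigcupP/bigcupP => -[i iP];
  rewrite ?B_preim ?inE => gi; exists i; rewrite ?B_preim ?inE.
Qed.

Lemma pdf_shape_preim v s k : pdf_shape v s k P A -> pdf_shape v s k P B.
Proof.
case=> cardT cardP Ak A_disj; split => //.
- by rewrite cardsT (bij_eq_card f_bij) -cardsT.
- by move=> i iP; have [<- A1] := Ak i iP; rewrite B_preim card_preim // inE f1.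
- move=> i j iP jP ij; have /pred0P Aij := A_disj i j iP jP ij.
  by apply/pred0P => x /=; rewrite !B_preim !inE; apply: Aij.
Qed.

Lemma DPDF_preim v s k lam mu :
  is_DPDF v s k lam mu P A -> is_DPDF v s k lam mu P B.
Proof.
case=> /pdf_shape_preim shapeB mult; split=> // g; have [inA outA] := mult (f g).
by rewrite union_fam_preim int_mult_preim -(inj_eq f_inj) f1; split.
Qed.

Lemma EPDF_preim v s k lam mu :
  is_EPDF v s k lam mu P A -> is_EPDF v s k lam mu P B.
Proof.
case=> /pdf_shape_preim shapeB mult; split=> // g; have [inA outA] := mult (f g).
by rewrite union_fam_preim ext_mult_preim -(inj_eq f_inj) f1; split.
Qed.

End Preimage.

Section SubfieldCoordinates.
Variables (F : finFieldType) (q : nat) (alpha : F).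
Local Open Scope ring_scope.
Hypotheses (q_pchar : [pchar F].-nat q) (cardF : #|F| = (q ^ 2)%N)
  (alpha_notK : alpha \notin subGF F q).
Local Notation K := (subGF F q).

Lemma subGF_q_gt1 : (1 < q)%N.
Proof. by have := card_finNzRing_gt1 F; rewrite cardF; case: q => [|[]]. Qed.

Lemma frobD (x y : F) : (x + y) ^+ q = x ^+ q + y ^+ q.
Proof. exact: exprDn_pchar. Qed.

Lemma frobN (x : F) : (- x) ^+ q = - x ^+ q.
Proof.
apply/eqP; rewrite -subr_eq0 opprK -frobD addNr expr0n.
by have := subGF_q_gt1; case: q.
Qed.

Lemma frobB (x y : F) : (x - y) ^+ q = x ^+ q - y ^+ q.
Proof. by rewrite frobD frobN. Qed.

Lemma frobK (x : F) : (x ^+ q) ^+ q = x.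
Proof. by rewrite -exprM mulnn -cardF expf_card. Qed.

Lemma subGF0 : 0 \in K. Proof. by rewrite inE expr0n; have := subGF_q_gt1; case: q. Qed.
Lemma subGF1 : 1 \in K. Proof. by rewrite inE expr1n. Qed.

Lemma subGFB x y : x \in K -> y \in K -> x - y \in K.
Proof. by rewrite !inE frobB => /eqP-> /eqP->. Qed.

Lemma subGFM x y : x \in K -> y \in K -> x * y \in K.
Proof. by rewrite !inE exprMn => /eqP-> /eqP->. Qed.

Lemma subGFV x : x \in K -> x^-1 \in K.
Proof. by rewrite !inE exprVn => /eqP->. Qed.

(* For z = a + b alpha with a, b in GF(q), the Frobenius x |-> x ^+ q fixes a
   and b, so z - z ^+ q = b (alpha - alpha ^+ q). *)
Definition alpha_coord (z : F) : F := (z - z ^+ q) / (alpha - alpha ^+ q).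

Let alpha_frob_neq : alpha - alpha ^+ q != 0.
Proof. by rewrite subr_eq0 eq_sym; move: alpha_notK; rewrite inE. Qed.

Lemma alpha_coord_subGF z : alpha_coord z \in K.
Proof.
rewrite inE /alpha_coord exprMn exprVn !frobB !frobK.
by rewrite -[alpha ^+ q - _]opprB -[z ^+ q - _]opprB invrN mulrNN.
Qed.

Lemma alpha_coord_eq0 z : (alpha_coord z == 0) = (z \in K).
Proof. by rewrite mulf_eq0 invr_eq0 (negbTE alpha_frob_neq) orbF subr_eq0 eq_sym inE. Qed.

Lemma alpha_coordD x y : alpha_coord (x + y) = alpha_coord x + alpha_coord y.
Proof. by rewrite /alpha_coord frobD; ring. Qed.

Lemma alpha_coordZ b z : b \in K -> alpha_coord (b * z) = b * alpha_coord z.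
Proof. by rewrite inE => /eqP bK; rewrite /alpha_coord exprMn bK; ring. Qed.

Lemma alpha_coord1 : alpha_coord 1 = 0.
Proof. by apply/eqP; rewrite alpha_coord_eq0 subGF1. Qed.

Lemma alpha_coord_alpha : alpha_coord alpha = 1.
Proof. exact: divff. Qed.

Lemma alpha_coord_lin a b :
  a \in K -> b \in K -> alpha_coord (a + b * alpha) = b.
Proof.
move=> aK bK; rewrite alpha_coordD alpha_coordZ // alpha_coord_alpha mulr1.
by move: aK; rewrite -alpha_coord_eq0 => /eqP->; rewrite add0r.
Qed.

Lemma alpha_coord_subr z : z - alpha_coord z * alpha \in K.
Proof.
have zq : z ^+ q = z - alpha_coord z * (alpha - alpha ^+ q).
  by rewrite /alpha_coord divfK //; ring.
have := alpha_coord_subGF z; rewrite inE => /eqP cK.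
by rewrite inE frobB exprMn cK zq; apply/eqP; ring.
Qed.

Lemma card_subGF : #|K| = q.
Proof.
pose lin (ab : F * F) := ab.1 + ab.2 * alpha.
have lin_inj : {in setX K K &, injective lin}.
  move=> [a b] [a' b']; rewrite !in_setX /lin /= => /andP[aK bK] /andP[a'K b'K] eq_ab.
  have eq_b : b = b' by rewrite -(alpha_coord_lin aK bK) eq_ab alpha_coord_lin.
  by move: eq_ab; rewrite eq_b => /addIr->.
have lin_onto : lin @: setX K K = setT.
  apply/setP => z; rewrite inE; apply/imsetP.
  exists (z - alpha_coord z * alpha, alpha_coord z); last by rewrite /lin subrK.
  by rewrite in_setX alpha_coord_subr alpha_coord_subGF.
have := card_in_imset lin_inj; rewrite lin_onto cardsT cardF cardsX mulnn.
by move/(expIn (isT : (0 < 2)%N)).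
Qed.

Local Notation P := (subGFstar F q).
Local Notation S := (S_set q alpha).

Lemma subGFstarE c : (c \in P) = (c != 0) && (c \in K).
Proof. exact: in_setD1. Qed.

Lemma subGFstar_subGF c : c \in P -> c \in K.
Proof. by rewrite subGFstarE => /andP[]. Qed.

Lemma card_subGFstar : #|P| = (q - 1)%N.
Proof. by have := cardsD1 0 K; rewrite subGF0 card_subGF add1n => {2}->; rewrite subn1. Qed.

Lemma S_setE c (u : {unit F}) : c \in K -> (u \in S c) = (alpha_coord (val u) == c).
Proof.
move=> cK; rewrite inE; apply/existsP/eqP => [[a /andP[aK /eqP->]]|<-].
  exact: alpha_coord_lin.
by exists (val u - alpha_coord (val u) * alpha); rewrite alpha_coord_subr subrK eqxx.
Qed.

Lemma card_S_set_cond d (Q : pred F) : d \in P ->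
  #|[set y in S d | Q (val y)]| = #|[set b in K | Q (b + d * alpha)]|.
Proof.
rewrite subGFstarE => /andP[d0 dK].
have shift_inj : injective (fun y : {unit F} => val y - d * alpha).
  by move=> y z /addIr /val_inj.
rewrite -(card_imset _ shift_inj); apply: eq_card => b; rewrite inE.
apply/imsetP/andP => [[y]|[bK Qb]].
  rewrite inE S_setE // => /andP[/eqP yd Qy] ->.
  by rewrite subrK Qy -yd alpha_coord_subr.
have bd_unit : b + d * alpha \is a GRing.unit.
  rewrite unitfE; apply: contra_neq d0 => bd0.
  by rewrite -(alpha_coord_lin bK dK) bd0; apply/eqP; rewrite alpha_coord_eq0 subGF0.
exists (FinRing.unit F bd_unit); last by rewrite addrK.
by rewrite inE S_setE //= alpha_coord_lin ?eqxx.
Qed.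

Lemma card_S_set d : d \in P -> #|S d| = q.
Proof.
move=> dP; transitivity #|[set y in S d | predT (val y)]|.
  by apply: eq_card => y; rewrite !inE andbT.
rewrite card_S_set_cond // -[in RHS]card_subGF.
by apply: eq_card => b; rewrite !inE andbT.
Qed.

Lemma card_S_set_translate (g : {unit F}) c d : c \in K -> d \in P ->
  #|[set y in S d | (g * y)%g \in S c]| =
  if alpha_coord (val g) != 0 then 1%N else if d * val g == c then q else 0%N.
Proof.
move=> cK dP; have dK := subGFstar_subGF dP.
have coord_g b : b \in K -> alpha_coord (val g * (b + d * alpha)) =
    b * alpha_coord (val g) + d * alpha_coord (val g * alpha).
  move=> bK; rewrite mulrDr alpha_coordD [val g * b]mulrC [val g * _]mulrCA.
  by rewrite (alpha_coordZ _ bK) (alpha_coordZ _ dK).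
transitivity #|[set y in S d | alpha_coord (val g * val y) == c]|.
  by apply: eq_card => y; rewrite [in LHS]inE [in RHS]inE (S_setE (g * y)%g cK) val_unitM.
rewrite (card_S_set_cond (fun z => alpha_coord (val g * z) == c)) //.
set v := alpha_coord (val g) in coord_g *; set w := alpha_coord (val g * alpha) in coord_g *.
have [v0|] := ifPn.
  have solK : (c - d * w) / v \in K.
    apply: subGFM (subGFV (alpha_coord_subGF _)).
    exact: subGFB cK (subGFM dK (alpha_coord_subGF _)).
  rewrite -[RHS](cards1 ((c - d * w) / v)); apply: eq_card => b; rewrite in_set inE.
  apply/andP/eqP => [[bK]|->]; first by rewrite coord_g // => /eqP <-; rewrite addrK mulfK.
  by rewrite coord_g // divfK // subrK.
rewrite negbK alpha_coord_eq0 => gK.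
have coord_gK b : b \in K -> alpha_coord (val g * (b + d * alpha)) = d * val g.
  move=> bK; rewrite coord_g // /v /w alpha_coordZ // alpha_coord_alpha mulr1.
  by move: gK; rewrite -alpha_coord_eq0 => /eqP->; rewrite mulr0 add0r.
have [dg_c|dg_c] := eqVneq (d * val g) c.
  rewrite -[in RHS]card_subGF; apply: eq_card => b; rewrite in_set.
  by case bK: (b \in K); rewrite //= coord_gK // dg_c eqxx.
apply: eq_card0 => b; rewrite in_set.
by case bK: (b \in K); rewrite //= coord_gK // (negbTE dg_c).
Qed.

Lemma mem_union_S (g : {unit F}) : (g \in union_fam P S) = (alpha_coord (val g) != 0).
Proof.
apply/bigcupP/idP => [[c]|g_in].
  by rewrite subGFstarE => /andP[c0 cK]; rewrite S_setE // => /eqP->.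
have gK := alpha_coord_subGF (val g).
by exists (alpha_coord (val g)); rewrite ?subGFstarE ?g_in ?S_setE.
Qed.

Lemma pdf_shape_S : pdf_shape (q ^ 2 - 1) (q - 1) q P S.
Proof.
split=> [||c cP|c d].
- by rewrite card_finField_unit cardF subn1.
- exact: card_subGFstar.
- move: (cP); rewrite card_S_set // subGFstarE => /andP[c0 cK].
  by rewrite S_setE // alpha_coord1 eq_sym.
- rewrite !subGFstarE => /andP[_ cK] /andP[_ dK] cd.
  by apply/pred0P => y /=; rewrite !S_setE //; case: eqP => // ->; apply/negbTE.
Qed.

Lemma unit_neq1 (g : {unit F}) : (g != 1%g) = (val g != 1).
Proof. by rewrite -(inj_eq val_inj). Qed.

Lemma DPDF_S : is_DPDF (q ^ 2 - 1) (q - 1) q (q - 1) 0 P S.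
Proof.
split=> [|g]; first exact: pdf_shape_S.
rewrite mem_union_S; split=> [g_in|g_out g1].
  have g1 : g != 1%g by rewrite unit_neq1; apply: contra_neq g_in => ->; rewrite alpha_coord1.
  rewrite int_multE // (eq_bigr (fun _ => 1%N)) => [|c cP].
    by rewrite sum1_card card_subGFstar.
  by rewrite card_S_set_translate ?subGFstar_subGF // g_in.
rewrite int_multE // big1 // => c cP.
rewrite card_S_set_translate ?subGFstar_subGF // (negbTE g_out).
have [cg_c|//] := eqVneq (c * val g) c.
move: cP g1; rewrite subGFstarE unit_neq1 => /andP[c0 _].
by rewrite -(inj_eq (mulfI c0)) cg_c mulr1 eqxx.
Qed.

Lemma EPDF_S :
  is_EPDF (q ^ 2 - 1) (q - 1) q ((q - 1) * (q - 2)) (q ^ 2 - q) P S.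
Proof.
split=> [|g]; first exact: pdf_shape_S.
rewrite mem_union_S; split=> [g_in|g_out g1]; rewrite ext_multE.
  rewrite (eq_bigr (fun _ => (q - 2)%N)) => [|c cP].
    by rewrite sum_nat_const card_subGFstar.
  rewrite (eq_bigr (fun _ => 1%N)) => [|d /andP[dP _]]; last first.
    by rewrite card_S_set_translate ?subGFstar_subGF // g_in.
  have := cardsD1 c P; rewrite cP card_subGFstar add1n sum1_card => cardPc.
  transitivity #|P :\ c|; last by lia.
  by apply: eq_card => d; rewrite in_setD1 andbC.
have gK : val g \in K by move: g_out; rewrite negbK alpha_coord_eq0.
have g0 : val g != 0 by rewrite -unitfE (valP g).
rewrite (eq_bigr (fun _ => q)) => [|c cP].
  by rewrite sum_nat_const card_subGFstar mulnBl mul1n mulnn.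
have [c0 cK] : c != 0 /\ c \in K by apply/andP; rewrite -subGFstarE.
have cg_P : c / val g \in P by rewrite subGFstarE mulf_neq0 ?invr_eq0 ?subGFM ?subGFV.
have cg_c : c / val g != c.
  by rewrite -[X in _ != X]mulr1 (inj_eq (mulfI c0)) invr_eq1 -unit_neq1.
rewrite (bigD1 (c / val g)) ?cg_P //= card_S_set_translate // (negbTE g_out).
rewrite divfK // eqxx big1 ?addn0 // => d /andP[/andP[dP _] d_cg].
rewrite card_S_set_translate ?subGFstar_subGF // (negbTE g_out).
by have [dg_c|//] := eqVneq (d * val g) c; rewrite -dg_c mulfK ?eqxx in d_cg.
Qed.

End SubfieldCoordinates.

Lemma prim_root_notin_subGF (F : finFieldType) q (alpha : F) : 1 < q ->
  ((q ^ 2 - 1).-primitive_root alpha)%R -> alpha \notin subGF F q.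
Proof.
move=> q_gt1 prim; rewrite inE; apply/negP => /eqP alpha_q.
have q_lt_q2 : q < q ^ 2 by rewrite -{1}(expn1 q) ltn_exp2l.
have alpha0 : (alpha != 0)%R by rewrite (prim_root_eq0 prim); lia.
have : (alpha ^+ (q - 1) = 1)%R.
  by apply: (mulIf alpha0); rewrite mul1r -exprSr subn1 prednK ?alpha_q // ltnW.
move/eqP; rewrite -(prim_order_dvd prim) => /dvdn_leq; lia.
Qed.

Section ExponentialIsomorphism.
Variables (F : finFieldType) (n : nat) (alpha : F).
Hypotheses (n_gt1 : 1 < n) (cardF : #|F| = n.+1)
  (prim : (n.-primitive_root alpha)%R).

Definition expu (i : 'Z_n) : {unit F} := insubd (1%g : {unit F}) (alpha ^+ i)%R.

Let Zp_n : (Zp_trunc n).+2 = n := Zp_cast n_gt1.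

Lemma val_expu i : val (expu i) = (alpha ^+ i)%R.
Proof.
apply: insubdK; rewrite unfold_in /= unitfE expf_neq0 //.
by rewrite (prim_root_eq0 prim) -lt0n ltnW.
Qed.

Lemma expuM : {morph expu : i j / (i * j)%g}.
Proof.
have alpha_order : (alpha ^+ (Zp_trunc n).+2 = 1)%R by rewrite Zp_n prim_expr_order.
by move=> i j; apply: val_inj; rewrite val_unitM !val_expu /= expr_mod ?exprD.
Qed.

Lemma expu_bij : bijective expu.
Proof.
have Zp_lt (i : 'Z_n) : i < n by rewrite -[n in _ < n]Zp_n.
apply: inj_card_bij.
  move=> i j /(congr1 val); rewrite !val_expu => /eqP.
  by rewrite (eq_prim_root_expr prim) !modn_small // => /eqP /val_inj.
by rewrite card_ord Zp_n -cardsT card_finField_unit cardF.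
Qed.

End ExponentialIsomorphism.

Lemma S'_set_preim (F : finFieldType) q (alpha c : F) : 1 < q ^ 2 - 1 ->
  ((q ^ 2 - 1).-primitive_root alpha)%R ->
  S'_set q alpha c = @expu F (q ^ 2 - 1) alpha @^-1: S_set q alpha c.
Proof.
move=> n_gt1 prim; apply/setP => i; rewrite [LHS]inE [RHS]inE.
apply/existsP/idP => [[u /andP[uS /eqP alpha_i]]|iS].
  by rewrite (_ : expu _ _ = u) //; apply: val_inj; rewrite val_expu.
by exists (expu alpha i); rewrite iS val_expu ?eqxx.
Qed.

Theorem mainTheorem1 (F : finFieldType) (q : nat) (alpha : F) :
  (exists p k : nat, [/\ prime p, 0 < k & q = p ^ k]) ->
  #|F| = q ^ 2 ->
  ((q ^ 2 - 1).-primitive_root alpha)%R ->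
  (is_DPDF (q ^ 2 - 1) (q - 1) q (q - 1) 0
           (@subGFstar F q) (@S_set F q alpha)
   /\ is_EPDF (q ^ 2 - 1) (q - 1) q ((q - 1) * (q - 2)) (q ^ 2 - q)
           (@subGFstar F q) (@S_set F q alpha))
  /\
  (is_DPDF (q ^ 2 - 1) (q - 1) q (q - 1) 0
           (@subGFstar F q) (@S'_set F q alpha)
   /\ is_EPDF (q ^ 2 - 1) (q - 1) q ((q - 1) * (q - 2)) (q ^ 2 - q)
           (@subGFstar F q) (@S'_set F q alpha)).
Proof.
move=> [p [k [p_prime _ qE]]] cardF prim.
have q_pchar : [pchar F]%R.-nat q.
  have p_char : p \in [pchar F]%R.
    by apply: (card_finPcharP (n := k * 2)); rewrite // cardF qE -expnM.
  by rewrite qE pnatX pnatE ?p_char.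
have q_gt1 := subGF_q_gt1 cardF.
have n_gt1 : 1 < q ^ 2 - 1 by rewrite -mulnn; nia.
have cardF' : #|F| = (q ^ 2 - 1).+1 by rewrite cardF subn1 prednK // -mulnn; nia.
have alpha_notK := prim_root_notin_subGF q_gt1 prim.
have S_DPDF := DPDF_S q_pchar cardF alpha_notK.
have S_EPDF := EPDF_S q_pchar cardF alpha_notK.
have S'_preim c := S'_set_preim c n_gt1 prim.
have expu_bij := expu_bij n_gt1 cardF' prim.
have expuM := expuM n_gt1 prim.
split; split=> //.
  exact: (DPDF_preim expu_bij expuM S'_preim S_DPDF).
exact: (EPDF_preim expu_bij expuM S'_preim S_EPDF).
Qed.
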